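(* Let $n\geq 2$ and let $(A,\cdot,[\cdot,\ldots,\cdot])$ be a transposed Poisson $n$-Lie algebra. Then $(A,\cdot,[\cdot,\ldots,\cdot])$ is simple if and only if the $n$-Lie algebra $(A,[\cdot,\ldots,\cdot])$ is simple.
   Context: An $n$-Lie algebra is a vector space $L$ with an $n$-linear skew-symmetric bracket satisfying $[[x_1,\ldots,x_n],y_2,\ldots,y_n]=\sum_{i=1}^n[x_1,\ldots,x_{i-1},[x_i,y_2,\ldots,y_n],x_{i+1},\ldots,x_n]$; an ideal is a subspace $I$ with $[I,A,\ldots,A]\subseteq I$, and it is simple if $[A,\ldots,A]\neq 0$ and its only ideals are $0$ and $A$. A transposed Poisson $n$-Lie algebra (over $\mathbb{C}$) is a triple $(A,\cdot,[\cdot,\ldots,\cdot])$ where $(A,\cdot)$ is commutative associative, $(A,[\cdot,\ldots,\cdot])$ is an $n$-Lie algebra, and $n\,h\,[a_1,\ldots,a_n]=\sum_{i=1}^n[a_1,\ldots,h a_i,\ldots,a_n]$ for all $h,a_i\in A$. An ideal of it is a subspace $J$ with $A\cdot J\subseteq J$ and $[J,A,\ldots,A]\subseteq J$; it is simple if $[A,\ldots,A]\neq 0$ and its only ideals are $0$ and $A$. *)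

From HB Require Import structures.
From mathcomp Require Import all_boot all_order all_algebra.
From mathcomp Require Import reals complex.
Set Implicit Arguments. Unset Strict Implicit. Unset Printing Implicit Defensive.
Import Order.TTheory GRing.Theory Num.Theory.
Local Open Scope ring_scope.

Section TPnLie.
Variables (K : fieldType) (V : lmodType K) (n : nat).

Definition upd (x : {ffun 'I_n -> V}) (i : 'I_n) (v : V) : {ffun 'I_n -> V} :=
  [ffun j => if j == i then v else x j].

Definition swp (x : {ffun 'I_n -> V}) (i j : 'I_n) : {ffun 'I_n -> V} :=
  [ffun k => if k == i then x j else if k == j then x i else x k].

Definition multilinear (br : {ffun 'I_n -> V} -> V) : Prop :=
  forall (x : {ffun 'I_n -> V}) (i : 'I_n) (a : K) (u v : V),
    br (upd x i (a *: u + v)) = a *: br (upd x i u) + br (upd x i v).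

Definition skew_symmetric (br : {ffun 'I_n -> V} -> V) : Prop :=
  forall (x : {ffun 'I_n -> V}) (i j : 'I_n), i != j -> br (swp x i j) = - br x.

(* Filippov identity: [[x_1..x_n], y_2..y_n] = sum_i [x_1..[x_i,y_2..y_n]..x_n];
   the first slot of y is the index k with val k = 0 (its content is ignored). *)
Definition filippov (br : {ffun 'I_n -> V} -> V) : Prop :=
  forall (x y : {ffun 'I_n -> V}) (k : 'I_n), val k = 0%N ->
    br (upd y k (br x)) = \sum_(i < n) br (upd x i (br (upd y k (x i)))).

Definition is_nLie (br : {ffun 'I_n -> V} -> V) : Prop :=
  [/\ multilinear br, skew_symmetric br & filippov br].

Definition is_comm_assoc (mul : V -> V -> V) : Prop :=
  [/\ forall (a : K) (u v w : V), mul (a *: u + v) w = a *: mul u w + mul v w,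
      forall u v, mul u v = mul v u &
      forall u v w, mul u (mul v w) = mul (mul u v) w].

Definition tp_identity (mul : V -> V -> V) (br : {ffun 'I_n -> V} -> V) : Prop :=
  forall (h : V) (a : {ffun 'I_n -> V}),
    n%:R *: mul h (br a) = \sum_(i < n) br (upd a i (mul h (a i))).

Definition is_TP_nLie (mul : V -> V -> V) (br : {ffun 'I_n -> V} -> V) : Prop :=
  [/\ is_comm_assoc mul, is_nLie br & tp_identity mul br].

Definition subspace (I : V -> Prop) : Prop :=
  [/\ I 0, forall u v, I u -> I v -> I (u + v) & forall (a : K) u, I u -> I (a *: u)].

Definition nLie_ideal (br : {ffun 'I_n -> V} -> V) (I : V -> Prop) : Prop :=
  subspace I /\
  forall (x : {ffun 'I_n -> V}) (k : 'I_n), val k = 0%N -> I (x k) -> I (br x).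

Definition TP_ideal (mul : V -> V -> V) (br : {ffun 'I_n -> V} -> V) (I : V -> Prop) : Prop :=
  nLie_ideal br I /\ forall a u, I u -> I (mul a u).

Definition trivial_or_full (I : V -> Prop) : Prop :=
  (forall v, I v -> v = 0) \/ (forall v, I v).

Definition nLie_simple (br : {ffun 'I_n -> V} -> V) : Prop :=
  (exists x, br x != 0) /\ forall I, nLie_ideal br I -> trivial_or_full I.

Definition TP_simple (mul : V -> V -> V) (br : {ffun 'I_n -> V} -> V) : Prop :=
  (exists x, br x != 0) /\ forall I, TP_ideal mul br I -> trivial_or_full I.

End TPnLie.

From HB Require Import structures.
From mathcomp Require Import all_boot all_order all_algebra.
From mathcomp Require Import reals complex.
Import GRing.Theory Num.Theory.
Set Implicit Arguments. Unset Strict Implicit.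
Local Open Scope ring_scope.

(* Only "TP simple -> n-Lie simple" needs work.  Let I be an n-Lie ideal.
   Two applications of the transposed Poisson identity and two of the
   Filippov identity show that (n^2 - n) h [[b], u, y_3, ..., y_n] lies in I
   for u in I; as n^2 - n <> 0 and TP simplicity forces the brackets to span A,
   h [x] lies in I whenever x_2 does.  Hence {w in I | A w ⊆ I} is a TP ideal.
   If it is A then so is I; if it is 0, every bracket with an argument in I
   vanishes, so I lies in the centre, a TP ideal different from A, hence 0. *)

Section Tuples.
Variables (K : fieldType) (V : lmodType K) (n : nat).
Implicit Types (x : {ffun 'I_n -> V}) (i j : 'I_n) (u v : V).

Lemma updE x i v j : upd x i v j = if j == i then v else x j.
Proof. by rewrite ffunE. Qed.

Lemma upd_eq x i v : upd x i v i = v.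
Proof. by rewrite updE eqxx. Qed.

Lemma upd_neq x i v j : j != i -> upd x i v j = x j.
Proof. by rewrite updE => /negbTE->. Qed.

Lemma upd_upd x i u v : upd (upd x i u) i v = upd x i v.
Proof. by apply/ffunP=> j; rewrite !updE; case: eqP. Qed.

Lemma upd_updC x i j u v : i != j -> upd (upd x i u) j v = upd (upd x j v) i u.
Proof.
move=> neq_ij; apply/ffunP=> k; rewrite !updE.
by have [->|//] := eqVneq k j; rewrite eq_sym (negbTE neq_ij).
Qed.

Lemma upd_id x i : upd x i (x i) = x.
Proof. by apply/ffunP=> j; rewrite updE; case: eqP => [->|]. Qed.

End Tuples.

Section Subspaces.
Variables (K : fieldType) (V : lmodType K) (I : V -> Prop).
Hypothesis subI : subspace I.

Lemma subspace0 : I 0.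
Proof. by case: subI. Qed.

Lemma subspaceD u v : I u -> I v -> I (u + v).
Proof. by case: subI => _ + _; apply. Qed.

Lemma subspaceZ (a : K) u : I u -> I (a *: u).
Proof. by case: subI => _ _; apply. Qed.

Lemma subspaceN u : I u -> I (- u).
Proof. by rewrite -scaleN1r; apply: subspaceZ. Qed.

Lemma subspace_sum (m : nat) (P : pred 'I_m) (F : 'I_m -> V) :
  (forall i, P i -> I (F i)) -> I (\sum_(i < m | P i) F i).
Proof. by apply: big_ind => //; [apply: subspace0 | apply: subspaceD]. Qed.

Lemma subspaceZ_inv (c : K) u : c != 0 -> I (c *: u) -> I u.
Proof. by move=> c_neq0 /(subspaceZ c^-1); rewrite scalerA mulVf // scale1r. Qed.

Definition congr_mod u v := I (u - v).

Lemma congr_mod_sym u v : congr_mod u v -> congr_mod v u.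
Proof. by move/subspaceN; rewrite /congr_mod opprB. Qed.

Lemma congr_mod_trans v u w : congr_mod u v -> congr_mod v w -> congr_mod u w.
Proof. by move=> Iuv /(subspaceD Iuv); rewrite /congr_mod addrA subrK. Qed.

Lemma congr_modZ (c : K) u v : congr_mod u v -> congr_mod (c *: u) (c *: v).
Proof. by rewrite /congr_mod -scalerBr; apply: subspaceZ. Qed.

Lemma congr_mod_sum (m : nat) (F G : 'I_m -> V) :
  (forall i, congr_mod (F i) (G i)) ->
  congr_mod (\sum_(i < m) F i) (\sum_(i < m) G i).
Proof. by rewrite /congr_mod -sumrB => ?; apply: subspace_sum. Qed.

End Subspaces.

Section Multilinear.
Variables (K : fieldType) (V : lmodType K) (n : nat).
Variable br : {ffun 'I_n -> V} -> V.
Hypothesis brL : multilinear br.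

Lemma br_upd0 x i : br (upd x i 0) = 0.
Proof.
have := brL x i 1 0 0; rewrite !scale1r addr0 => /eqP.
by rewrite addrC -subr_eq subrr eq_sym => /eqP.
Qed.

Lemma br_updZ x i a u : br (upd x i (a *: u)) = a *: br (upd x i u).
Proof. by have := brL x i a u 0; rewrite addr0 br_upd0 addr0. Qed.

Lemma br_updD x i u v : br (upd x i (u + v)) = br (upd x i u) + br (upd x i v).
Proof. by have := brL x i 1 u v; rewrite !scale1r. Qed.

Lemma br_updB x i u v : br (upd x i (u - v)) = br (upd x i u) - br (upd x i v).
Proof. by rewrite br_updD -scaleN1r br_updZ scaleN1r. Qed.

End Multilinear.

Section CommAssoc.
Variables (K : fieldType) (V : lmodType K) (mul : V -> V -> V).
Hypothesis mulCA : is_comm_assoc mul.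

Lemma mul_0 h : mul h 0 = 0.
Proof.
case: mulCA => lin comm _; have := lin 1 0 0 h; rewrite !scale1r addr0 comm.
by move=> /eqP; rewrite addrC -subr_eq subrr eq_sym => /eqP.
Qed.

Lemma mul_add h u v : mul h (u + v) = mul h u + mul h v.
Proof.
case: mulCA => lin comm _; rewrite !(comm h).
by have := lin 1 u v h; rewrite !scale1r.
Qed.

Lemma mul_scale h a u : mul h (a *: u) = a *: mul h u.
Proof.
case: mulCA => lin comm _; rewrite !(comm h).
by have := lin a u 0 h; rewrite addr0 -(comm h 0) mul_0 addr0.
Qed.

Lemma mul_sum h (m : nat) (F : 'I_m -> V) :
  mul h (\sum_(i < m) F i) = \sum_(i < m) mul h (F i).
Proof. exact: (big_morph (mul h) (mul_add h) (mul_0 h)). Qed.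

End CommAssoc.

Section Ideals.
Variables (K : fieldType) (V : lmodType K) (n : nat).
Variables (mul : V -> V -> V) (br : {ffun 'I_n -> V} -> V).
Implicit Types (I : V -> Prop) (x a : {ffun 'I_n -> V}) (i j : 'I_n) (h u v : V).

Lemma nLie_ideal_br (brS : skew_symmetric br) I x j :
  nLie_ideal br I -> I (x j) -> I (br x).
Proof.
pose k0 : 'I_n := Ordinal (leq_ltn_trans (leq0n j) (ltn_ord j)).
move=> [subI idI] Ixj; have [eq_j|neq_j] := eqVneq k0 j.
  by apply: (idI x k0) => //; rewrite eq_j.
have := idI (swp x k0 j) k0 erefl; rewrite brS // ffunE eqxx.
by move=> /(_ Ixj) /(subspaceN subI); rewrite opprK.
Qed.

Lemma br_congr_mod (brL : multilinear br) (brS : skew_symmetric br) I x i u v :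
  nLie_ideal br I -> congr_mod I u v ->
  congr_mod I (br (upd x i u)) (br (upd x i v)).
Proof.
move=> idI Iuv; rewrite /congr_mod -br_updB //.
by apply: (nLie_ideal_br brS (j := i)) => //; rewrite upd_eq.
Qed.

Hypothesis TP : is_TP_nLie mul br.

(* In the TP identity for [a], every term but the j-th keeps a_j as argument. *)
Lemma tp_congr_mod I a j h : nLie_ideal br I -> I (a j) ->
  congr_mod I (n%:R *: mul h (br a)) (br (upd a j (mul h (a j)))).
Proof.
case: TP => _ [_ brS _] tpI idI Iaj.
rewrite /congr_mod tpI (bigD1 j) //= addrAC subrr add0r.
apply: subspace_sum => [|i neq_ij]; first by case: idI.
by apply: (nLie_ideal_br brS (j := j)) => //; rewrite upd_neq // eq_sym.
Qed.

Lemma mul_br_subspace I a h : n%:R != 0 :> K -> subspace I ->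
  (forall i, I (br (upd a i (mul h (a i))))) -> I (mul h (br a)).
Proof.
case: TP => _ _ tpI n_neq0 subI Ibr.
by apply: (subspaceZ_inv subI n_neq0); rewrite tpI; apply: subspace_sum.
Qed.

Definition ideal_core I w := I w /\ forall h, I (mul h w).

Lemma TP_ideal_core I : n%:R != 0 :> K -> nLie_ideal br I ->
  TP_ideal mul br (ideal_core I).
Proof.
have [mulCA [_ brS _] _] := TP; have [_ _ assoc] := mulCA.
move=> n_neq0 idI; have [subI idI'] := idI.
have corD u v : ideal_core I u -> ideal_core I v -> ideal_core I (u + v).
  by move=> [Iu Mu] [Iv Mv]; split=> [|h]; rewrite ?mul_add //; apply: subspaceD.
have corZ c u : ideal_core I u -> ideal_core I (c *: u).
  by move=> [Iu Mu]; split=> [|h]; rewrite ?mul_scale //; apply: subspaceZ.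
have cor0 : ideal_core I 0 by split=> [|h]; rewrite ?mul_0 //; apply: subspace0.
split; [split=> [|x k k0 [Ixk Mxk]] | move=> h w [_ Mw]].
- by split.
- split=> [|h]; first exact: idI' k0 Ixk.
  apply: mul_br_subspace => // i; apply: (nLie_ideal_br brS (j := k)) => //.
  by have [->|neq_ik] := eqVneq i k; rewrite ?upd_eq ?upd_neq // eq_sym.
- by split=> [|h']; rewrite ?assoc.
Qed.

Definition center w := forall x k, val k = 0%N -> br (upd x k w) = 0.

Lemma center_br x k : val k = 0%N -> center (x k) -> br x = 0.
Proof. by move=> k0 Zxk; rewrite -(upd_id x k); apply: Zxk. Qed.

Lemma TP_ideal_center : TP_ideal mul br center.
Proof.
have [mulCA [brL brS brF] tpI] := TP.
split; [split; [split|] |].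
- by move=> x k _; rewrite br_upd0.
- by move=> u v Zu Zv x k k0; rewrite br_updD // Zu // Zv // addr0.
- by move=> c u Zu x k k0; rewrite br_updZ // Zu // scaler0.
- move=> x k k0 Zxk y k' k0'; rewrite brF //; apply: big1 => i _.
  have [->|neq_ik] := eqVneq i k; first by rewrite Zxk // br_upd0.
  by apply: (center_br (k := k)) => //; rewrite upd_neq // eq_sym.
- move=> h w Zw x k k0; have := tpI h (upd x k w).
  rewrite Zw // mul_0 // scaler0 (bigD1 k) //= upd_eq upd_upd.
  rewrite big1 ?addr0 // => i neq_ik.
  by apply: (center_br (k := k)) => //; rewrite upd_neq ?upd_eq // eq_sym.
Qed.

Definition bracket_span v :=
  forall P : V -> Prop, subspace P -> (forall x, P (br x)) -> P v.

Lemma TP_ideal_bracket_span : n%:R != 0 :> K -> TP_ideal mul br bracket_span.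
Proof.
have [mulCA _ _] := TP; move=> n_neq0.
have spanS : subspace bracket_span.
  split=> [P subP _|u v Su Sv P subP brP|c u Su P subP brP].
  - exact: subspace0.
  - by apply: (subspaceD subP); [apply: Su | apply: Sv].
  - by apply: (subspaceZ subP); apply: Su.
have span_br x : bracket_span (br x) by move=> P _; apply.
split; [by split=> // x k _ _; apply: span_br | move=> h w Sw].
apply: (Sw (fun w => bracket_span (mul h w))) => [|x].
  split=> [|u v|c u]; rewrite ?mul_0 ?mul_add ?mul_scale //.
  - exact: (subspace0 spanS).
  - exact: (subspaceD spanS).
  - exact: (subspaceZ spanS).
by apply: mul_br_subspace => // i; apply: span_br.
Qed.

End Ideals.

Section Simplicity.
Variables (K : fieldType) (V : lmodType K) (n : nat).
Variables (mul : V -> V -> V) (br : {ffun 'I_n -> V} -> V).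
Implicit Types (I : V -> Prop) (x b : {ffun 'I_n -> V}) (h : V).

Lemma nLie_simple_TP_simple : nLie_simple br -> TP_simple mul br.
Proof. by case=> br_neq0 simple_br; split=> // I [idI _]; apply: simple_br. Qed.

Hypothesis charK : has_pchar0 K.
Hypothesis n_gt1 : (1 < n)%N.
Hypothesis TP : is_TP_nLie mul br.

Let k0 : 'I_n := Ordinal (ltnW n_gt1).
Let k1 : 'I_n := Ordinal n_gt1.

Let natf_neq0 m : (0 < m)%N -> m%:R != 0 :> K.
Proof. by have /pcharf0P charK0 := charK; rewrite charK0 -lt0n. Qed.

Lemma mul_br_ideal_bracket I x b h : nLie_ideal br I -> I (x k1) ->
  I (mul h (br (upd x k0 (br b)))).
Proof.
have [mulCA [brL brS brF] _] := TP.
move=> idI Ixk1; have subI : subspace I by case: idI.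
have neq_k01 : k0 != k1 by [].
set z := upd x k0 (br b); set u := x k1.
have zk1 : z k1 = u by rewrite upd_neq.
pose w i := br (upd x k0 (b i)).
have Iw i : I (w i) by apply: (nLie_ideal_br brS (j := k1)); rewrite ?upd_neq.
have tp_z := tp_congr_mod TP (a := z) (j := k1) h idI; rewrite zk1 in tp_z.
have filippov_hu : br (upd z k1 (mul h u)) =
    \sum_(i < n) br (upd b i (br (upd (upd x k1 (mul h u)) k0 (b i)))).
  by rewrite /z upd_updC // brF.
have filippov_z : br z = \sum_(i < n) br (upd b i (w i)) by rewrite brF.
have tp_w i : congr_mod I (br (upd b i (br (upd (upd x k1 (mul h u)) k0 (b i)))))
                          (n%:R *: (n%:R *: mul h (br (upd b i (w i))))).
  apply: (congr_mod_trans subI (v := br (upd b i (n%:R *: mul h (w i))))).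
    apply: br_congr_mod => //; apply: (congr_mod_sym subI).
    have xk1 : upd x k0 (b i) k1 = u by rewrite upd_neq.
    have := tp_congr_mod TP (a := upd x k0 (b i)) (j := k1) h idI.
    by rewrite xk1 upd_updC //; apply.
  rewrite br_updZ //; apply: (congr_modZ subI); apply: (congr_mod_sym subI).
  have := tp_congr_mod TP (a := upd b i (w i)) (j := i) h idI.
  by rewrite upd_eq upd_upd; apply.
have congr_nn : congr_mod I (n%:R *: mul h (br z)) (n%:R *: (n%:R *: mul h (br z))).
  apply: (congr_mod_trans subI (tp_z Ixk1)); rewrite filippov_hu filippov_z.
  by rewrite mul_sum // !scaler_sumr; apply: (congr_mod_sum subI).
have nn_neq0 : (n%:R * n%:R - n%:R : K) != 0.
  rewrite -natrM -natrB ?leq_pmulr ?(ltnW n_gt1) // natf_neq0 // subn_gt0.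
  by rewrite ltn_Pmull // ltnW.
apply: (subspaceZ_inv subI nn_neq0); move/congr_mod_sym: congr_nn => /(_ subI).
by rewrite /congr_mod scalerBl scalerA.
Qed.

Lemma TP_simple_bracket_span P : TP_simple mul br -> subspace P ->
  (forall x, P (br x)) -> forall v, P v.
Proof.
move=> [[x br_neq0] simpleTP] subP brP v.
have [span0|spanT] := simpleTP _ (TP_ideal_bracket_span TP (natf_neq0 (ltnW n_gt1))).
  by rewrite (span0 (br x)) ?eqxx // in br_neq0 => Q _; apply.
exact: spanT.
Qed.

Lemma mul_br_ideal I x h : TP_simple mul br -> nLie_ideal br I -> I (x k1) ->
  I (mul h (br x)).
Proof.
have [mulCA [brL _ _] _] := TP.
move=> simpleTP idI; have subI : subspace I by case: idI.
pose P v := forall x h, I (x k1) -> I (mul h (br (upd x k0 v))).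
suff /(_ (x k0) x h) : forall v, P v by rewrite upd_id.
apply: TP_simple_bracket_span => // [|b y h' Iyk1]; last exact: mul_br_ideal_bracket.
split=> [y h' _|u v Pu Pv y h' Iyk1|c u Pu y h' Iyk1].
- by rewrite br_upd0 // mul_0 //; apply: subspace0.
- by rewrite br_updD // mul_add //; apply: (subspaceD subI); [apply: Pu | apply: Pv].
- by rewrite br_updZ // mul_scale //; apply: (subspaceZ subI); apply: Pu.
Qed.

Lemma TP_simple_nLie_simple : TP_simple mul br -> nLie_simple br.
Proof.
have [_ [_ brS _] _] := TP.
move=> simpleTP; have [[x0 br_neq0] simpleTP'] := simpleTP.
split=> [|I idI]; first by exists x0.
have := simpleTP' _ (TP_ideal_core TP (natf_neq0 (ltnW n_gt1)) idI).
case=> [core0|coreT]; last by right=> v; case: (coreT v).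
have br_slot1 x : I (x k1) -> br x = 0.
  move=> Ixk1; apply: core0; split=> [|h]; last exact: mul_br_ideal.
  exact: (nLie_ideal_br brS (j := k1)).
have sub_center u : I u -> center br u.
  move=> Iu y k val_k; apply: oppr_inj; rewrite oppr0 -(brS _ k k1) ?br_slot1 //.
    by rewrite ffunE eqxx; case: eqP => [->|_]; rewrite upd_eq.
  by apply/eqP=> /(congr1 val); rewrite /= val_k.
have [center0|centerT] := simpleTP' _ (TP_ideal_center TP).
  by left=> u /sub_center /center0.
by rewrite (center_br (k := k0) _ (centerT _)) ?eqxx in br_neq0.
Qed.

End Simplicity.

Local Open Scope complex_scope.

Theorem mainTheorem7 (R : realType) (V : lmodType R[i]) (n : nat) (hn : (2 <= n)%N)
    (mul : V -> V -> V) (br : {ffun 'I_n -> V} -> V) :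
  is_TP_nLie mul br -> (TP_simple mul br <-> nLie_simple br).
Proof.
move=> TP; split; last exact: nLie_simple_TP_simple.
by apply: TP_simple_nLie_simple hn TP; apply: pchar_num.
Qed.
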